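(* Let $m,n\ge0$. (a) For $0\le k,k'\le\min(m,n)$ and any integer $p$ with $\max(k,k')\le p\le m+n-\max(k,k')$, $$\sum_{\substack{i+j=p\\0\le i\le m,\ 0\le j\le n}} c_{m,n,k}(i,j)\,c_{m,n,k'}(m-i,n-j)=(-1)^k\,\delta_{k,k'}\,D(m,n,k).$$ (b) For pairs $(i,j),(i',j')$ with $0\le i,i'\le m$, $0\le j,j'\le n$ and $i+j=i'+j'=p$, $$\sum_{\substack{0\le k\le\min(m,n)\\ k\le p\le m+n-k}}(-1)^k\,C_{m,n,k}(m-i,n-j)\,C_{m,n,k}(i',j')\,D(m,n,k)=\delta_{i,i'}\delta_{j,j'}.$$
   Context: $D(m,n,k)=\binom{m+n-k+1}{k}\binom{m+n-2k}{m-k}$. Let $e,f,h$ be the standard basis of $\mathfrak{sl}(2,\mathbb{C})$. $V(n)$ is the irreducible representation of highest weight $n$ with fixed highest weight vector $\phi_n$; $\{f^i\phi_n\}_{0\le i\le n}$ is a basis, $f^{n+1}\phi_n=0$. $\mathfrak{sl}(2)$ acts on $V(m)\otimes V(n)$ by $X(v\otimes w)=Xv\otimes w+v\otimes Xw$. For $0\le k\le\min(m,n)$, $\phi_{m,n,k}=\sum_{l=0}^{k}(-1)^l\binom{m-l}{k-l}\binom{n-k+l}{l} f^l\phi_m\otimes f^{k-l}\phi_n$; it is a highest weight vector of weight $m+n-2k$ generating a copy of $V(m+n-2k)$ with basis $f^a\phi_{m,n,k}$, $0\le a\le m+n-2k$, and $V(m)\otimes V(n)$ is the direct sum of these copies.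 The coordinates $c_{m,n,k}(i,j)$ are defined by $f^{p-k}\phi_{m,n,k}=\sum_{i+j=p,\,0\le i\le m,\,0\le j\le n} c_{m,n,k}(i,j)\, f^i\phi_m\otimes f^j\phi_n$ for $k\le p\le m+n-k$. The Clebsch–Gordan coefficients $C_{m,n,k}(i,j)$ are defined by $f^i\phi_m\otimes f^j\phi_n=\sum_{k} C_{m,n,k}(i,j)\, f^{i+j-k}\phi_{m,n,k}$, sum over $0\le k\le\min(m,n)$ with $k\le i+j\le m+n-k$. *)

From HB Require Import structures.
From mathcomp Require Import all_boot all_order all_algebra.
Set Implicit Arguments. Unset Strict Implicit. Unset Printing Implicit Defensive.
Import Order.TTheory GRing.Theory Num.Theory.
Local Open Scope ring_scope.

(* A vector of V(m) (x) V(n) is represented by its coordinate function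
   v : nat -> nat -> rat, where v i j is the coefficient of
   f^i phi_m (x) f^j phi_n; only 0 <= i <= m, 0 <= j <= n are meaningful
   (coordinates outside this range are kept equal to 0 by the operations). *)
Definition tvec := nat -> nat -> rat.

(* Action of f on V(m) (x) V(n):
   f (f^i phi_m (x) f^j phi_n) = f^(i+1) phi_m (x) f^j phi_n + f^i phi_m (x) f^(j+1) phi_n,
   with f^(m+1) phi_m = 0 and f^(n+1) phi_n = 0. *)
Definition tf (m n : nat) (v : tvec) : tvec := fun i j =>
  (if [&& (0 < i)%N, (i <= m)%N & (j <= n)%N] then v i.-1 j else 0) +
  (if [&& (i <= m)%N, (0 < j)%N & (j <= n)%N] then v i j.-1 else 0).

Definition phimnk (m n k : nat) : tvec := fun i j =>
  if [&& (i <= k)%N, (j == k - i)%N, (i <= m)%N & (j <= n)%N]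
  then (-1) ^+ i * ('C(m - i, k - i) * 'C(n - k + i, i))%:R
  else 0.

Definition fpow_phi (m n k a : nat) : tvec := iter a (tf m n) (phimnk m n k).

Definition cmnk (m n k i j : nat) : rat := fpow_phi m n k (i + j - k) i j.

Definition Dmnk (m n k : nat) : rat :=
  ('C(m + n - k + 1, k) * 'C(m + n - 2 * k, m - k))%:R.

(* C : k -> i -> j -> rat are Clebsch-Gordan coefficients for (m,n) iff for all
   0<=i<=m, 0<=j<=n:
   f^i phi_m (x) f^j phi_n = sum_{0<=k<=min(m,n), k<=i+j<=m+n-k} C k i j f^(i+j-k) phi_{m,n,k}
   (equality of all coordinates). *)
Definition is_CG (m n : nat) (C : nat -> nat -> nat -> rat) : Prop :=
  forall i j : nat, (i <= m)%N -> (j <= n)%N ->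
  forall a b : nat, (a <= m)%N -> (b <= n)%N ->
    ((a == i) && (b == j))%:R =
    \sum_(k < (minn m n).+1 | (k <= i + j <= m + n - k)%N)
       C k i j * fpow_phi m n k (i + j - k) a b.

From HB Require Import structures.
From mathcomp Require Import all_boot all_order all_algebra.
From mathcomp Require Import ring lra zify.
Import Order.TTheory GRing.Theory Num.Theory.
Local Open Scope ring_scope.

(* The pairing bform u v = \sum_(i, j) u i j * v (m - i) (n - j) on V(m) (x) V(n) is
   symmetric and f is self-adjoint for it, so the pairing of f^a phi_{m,n,k} with
   f^b phi_{m,n,k'} equals that of phi_{m,n,k} with f^(a+b) phi_{m,n,k'}.  Since e kills
   phi_{m,n,k} and [e, f] = h, e f^(c+1) phi_{m,n,k} = (c+1)(m+n-2k-c) f^c phi_{m,n,k}, so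
   f^c phi_{m,n,k} = 0 for c > m+n-2k; this kills the pairing unless k = k'.  For k = k'
   the coordinates of the lowest weight vector f^(m+n-2k) phi_{m,n,k} alternate in sign
   along its antidiagonal, which reduces the pairing to two binomial convolutions: this is
   (a).  For (b), pair the basis vectors f^(m-i) phi_m (x) f^(n-j) phi_n and
   f^i' phi_m (x) f^j' phi_n after expanding both through the Clebsch-Gordan coefficients,
   and apply (a). *)

Lemma bin_mul_bin N a b : (b <= a)%N ->
  ('C(N, a) * 'C(a, b) = 'C(N, b) * 'C(N - b, a - b))%N.
Proof.
move=> le_ba; have [le_aN|lt_Na] := leqP a N; last first.
  rewrite bin_small // mul0n; have [le_bN|lt_Nb] := leqP b N.
    by rewrite (bin_small (n := (N - b)%N)) ?muln0 //; lia.
  by rewrite bin_small.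
have fact_pos : (0 < b`! * (a - b)`! * (N - a)`!)%N by rewrite !muln_gt0 !fact_gt0.
apply/eqP; rewrite -(eqn_pmul2r fact_pos); apply/eqP.
transitivity N`!; first by rewrite -(bin_fact le_aN) -(bin_fact le_ba); ring.
rewrite -(bin_fact (leq_trans le_ba le_aN)).
rewrite -(bin_fact (m := (a - b)%N) (n := (N - b)%N)); last by lia.
have -> : (N - b - (a - b) = N - a)%N by lia.
ring.
Qed.

Lemma mul_bin_shift a b i j :
  (i.+1 * a * 'C(a.-1, j) * 'C(b, i.+1) = j.+1 * b * 'C(a, j.+1) * 'C(b.-1, i))%N.
Proof.
transitivity ((i.+1 * 'C(b, i.+1)) * (a * 'C(a.-1, j)))%N; first ring.
rewrite mul_bin_diag -mul_bin_diag; ring.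
Qed.

(* The coefficient of x^k in (1 + x)^-(r+1) * (1 + x)^r = (1 + x)^-1. *)
Definition alt_bin_sum (r k : nat) : rat :=
  \sum_(l < k.+1) (-1) ^+ l * ('C(r + l, l) * 'C(r, k - l))%:R.

Lemma alt_bin_sum0 k : alt_bin_sum 0 k = (-1) ^+ k.
Proof.
rewrite /alt_bin_sum big_ord_recr /= big1 ?add0r.
  by rewrite add0n binn subnn bin0 muln1 mulr1.
move=> l _; rewrite bin0n.
have -> : (k - l == 0)%N = false by have := ltn_ord l; lia.
by rewrite muln0 mulr0.
Qed.

Lemma alt_bin_sumS r k : alt_bin_sum r.+1 k = alt_bin_sum r k.
Proof.
case: k => [|k]; first by rewrite /alt_bin_sum !big_ord_recr !big_ord0 /= !bin0.
pose M k := \sum_(l < k.+1) (-1) ^+ l * 'C(r.+1 + l, l)%:R * 'C(r, k - l)%:R : rat.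
have -> : alt_bin_sum r.+1 k.+1 = M k.+1 + M k.
  rewrite /alt_bin_sum /M big_ord_recr [X in _ = X + _]big_ord_recr /=.
  rewrite -addrA [X in _ = _ + X]addrC addrA; congr (_ + _); last first.
    by rewrite subnn !bin0 muln1 mulr1.
  rewrite -big_split /=; apply: eq_bigr => l _.
  rewrite subSn; last by rewrite -ltnS.
  rewrite binS !natrM natrD; ring.
symmetry; rewrite /alt_bin_sum /M big_ord_recl [X in _ = X + _]big_ord_recl /= -addrA.
congr (_ + _); first by rewrite !subn0 !bin0 !expr0 !mul1r mul1n.
rewrite -big_split /=; apply: eq_bigr => l _.
rewrite /bump /= !add1n subSS !addSn !addnS binS natrD !natrM exprS; ring.
Qed.

Lemma alt_bin_sumE r k : alt_bin_sum r k = (-1) ^+ k.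
Proof. by elim: r => [|r IH]; rewrite ?alt_bin_sum0 ?alt_bin_sumS. Qed.

Lemma bin_conv_sum c b k :
  (\sum_(l < k.+1) 'C(c + (k - l), k - l) * 'C(b + l, l) = 'C(c + b + k + 1, k))%N.
Proof.
elim: c k => [|c IHc] k.
  under eq_bigr do rewrite binn mul1n.
  elim: k => [|k IH]; first by rewrite big_ord_recr big_ord0 /= !bin0.
  rewrite big_ord_recr /= IH addnC (_ : 0 + b + k.+1 + 1 = (b + k.+1).+1)%N ?binS; last lia.
  by congr (_ + 'C(_, _))%N; lia.
elim: k => [|k IH]; first by rewrite big_ord_recr big_ord0 /= !bin0.
rewrite big_ord_recr /= subnn addn0 bin0 mul1n.
have split_bin (l : 'I_k.+1) : ('C(c.+1 + (k.+1 - l), k.+1 - l) * 'C(b + l, l) =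
   'C(c + (k.+1 - l), k.+1 - l) * 'C(b + l, l) + 'C(c.+1 + (k - l), k - l) * 'C(b + l, l))%N.
  rewrite subSn -?mulnDl; last by rewrite -ltnS.
  by rewrite addnS binS addSnnS.
rewrite (eq_bigr _ (fun l _ => split_bin l)) big_split /= IH.
have := IHc k.+1; rewrite big_ord_recr /= subnn addn0 bin0 mul1n => sum_c.
rewrite addnAC sum_c (_ : c.+1 + b + k.+1 + 1 = (c + b + k.+1 + 1).+1)%N ?binS; last lia.
by congr (_ + 'C(_, _))%N; lia.
Qed.

Lemma sum_ord_shift N (F : nat -> nat -> rat) :
  \sum_(i < N.+1) (if (0 < i)%N then F i.-1 (N - i)%N else 0) =
  \sum_(i < N.+1) (if (0 < N - i)%N then F i (N - i).-1 else 0).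
Proof.
rewrite big_ord_recl big_ord_recr /= subnn add0r addr0.
apply: eq_bigr => i _; rewrite /bump /= add1n subn_gt0 ltn_ord.
by congr F; have := ltn_ord i; lia.
Qed.

Lemma big_ord_single N i0 (F : nat -> rat) : (i0 < N)%N ->
  (forall i, i != i0 -> F i = 0) -> \sum_(i < N) F i = F i0.
Proof.
move=> lt_i0N F0; rewrite (bigD1 (Ordinal lt_i0N)) //= big1 ?addr0 // => i ne_i.
by apply: F0; apply: contra ne_i => /eqP eq_i; apply/eqP/val_inj.
Qed.

Definition homogeneous (d : nat) (v : tvec) := forall i j, (i + j != d)%N -> v i j = 0.

Lemma sum_homogeneous N M d (v : tvec) (G : nat -> nat -> rat) :
  (d <= N)%N -> (d <= M)%N -> homogeneous d v ->
  \sum_(i < N.+1) \sum_(j < M.+1) v i j * G i j =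
  \sum_(l < d.+1) v l (d - l)%N * G l (d - l)%N.
Proof.
move=> le_dN le_dM hom_v.
rewrite (big_ord_widen N.+1 (fun l => v l (d - l)%N * G l (d - l)%N)) //.
rewrite [RHS]big_mkcond; apply: eq_bigr => i _; case: ifP => le_id.
  rewrite (@big_ord_single M.+1 (d - i) (fun j => v i j * G i j)) //; first lia.
  by move=> j ne_j; rewrite hom_v ?mul0r //; apply: contra ne_j => /eqP <-; rewrite addKn.
apply: big1 => j _; rewrite hom_v ?mul0r //.
by apply: contraFN le_id => /eqP <-; rewrite ltnS leq_addr.
Qed.

Section TensorProduct.
Variables m n : nat.

Definition supported (v : tvec) :=
  forall i j, ~~ ((i <= m) && (j <= n))%N -> v i j = 0.

Lemma supported_homogeneous_eq0 d v : supported v -> homogeneous d v ->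
  (m + n < d)%N -> forall i j, v i j = 0.
Proof.
move=> supp_v hom_v lt_d i j.
have [/andP [le_im le_jn]|/supp_v //] := boolP ((i <= m) && (j <= n))%N.
by apply: hom_v; lia.
Qed.

Lemma tfE v i j : (i <= m)%N -> (j <= n)%N ->
  tf m n v i j = (if (0 < i)%N then v i.-1 j else 0) + (if (0 < j)%N then v i j.-1 else 0).
Proof. by move=> le_im le_jn; rewrite /tf le_im le_jn !andbT. Qed.

Lemma tf_supported v : supported (tf m n v).
Proof.
move=> i j; rewrite /tf negb_and => /orP [] /negbTE ->; by rewrite ?andbF addr0.
Qed.

Lemma tf_homogeneous d v : homogeneous d v -> homogeneous d.+1 (tf m n v).
Proof.
move=> hom_v i j ne_d; rewrite /tf.
by case: ifP => [/and3P [? _ _]|_]; case: ifP => [/and3P [_ ? _]|_]; rewrite ?hom_v ?addr0 //; lia.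
Qed.

Lemma phimnk_supported k : supported (phimnk m n k).
Proof.
by move=> i j; rewrite /phimnk; case: ifP => // /and4P [_ _ -> ->].
Qed.

Lemma phimnk_homogeneous k : homogeneous k (phimnk m n k).
Proof. by move=> i j ne_k; rewrite /phimnk; case: ifP => // /and4P [? /eqP ? _ _]; lia. Qed.

Lemma fpow_phiS k a : fpow_phi m n k a.+1 = tf m n (fpow_phi m n k a).
Proof. by rewrite /fpow_phi iterS. Qed.

Lemma fpow_phi_supported k a : supported (fpow_phi m n k a).
Proof. by case: a => [|a]; [apply: phimnk_supported | rewrite fpow_phiS; apply: tf_supported]. Qed.

Lemma fpow_phi_homogeneous k a : homogeneous (k + a) (fpow_phi m n k a).
Proof.
elim: a => [|a IH]; first by rewrite addn0; apply: phimnk_homogeneous.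
by rewrite addnS fpow_phiS; apply: tf_homogeneous.
Qed.

Definition bform (u v : tvec) : rat :=
  \sum_(i < m.+1) \sum_(j < n.+1) u i j * v (m - i)%N (n - j)%N.

Lemma eq_bform u u' v v' :
  (forall i j, (i <= m)%N -> (j <= n)%N -> u i j = u' i j) ->
  (forall i j, (i <= m)%N -> (j <= n)%N -> v i j = v' i j) ->
  bform u v = bform u' v'.
Proof.
move=> eq_u eq_v; apply: eq_bigr => i _; apply: eq_bigr => j _.
by rewrite eq_u ?eq_v ?leq_subr // -ltnS.
Qed.

Lemma bformC u v : bform u v = bform v u.
Proof.
rewrite /bform (reindex_inj rev_ord_inj); apply: eq_bigr => i _.
rewrite (reindex_inj rev_ord_inj); apply: eq_bigr => j _ /=.
by rewrite mulrC !subSS !subKn // -ltnS.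
Qed.

Lemma bform_tf u v : bform (tf m n u) v = bform u (tf m n v).
Proof.
rewrite /bform.
transitivity (\sum_(i < m.+1) \sum_(j < n.+1)
  ((if (0 < i)%N then u i.-1 j * v (m - i)%N (n - j)%N else 0) +
   (if (0 < j)%N then u i j.-1 * v (m - i)%N (n - j)%N else 0))).
  apply: eq_bigr => i _; apply: eq_bigr => j _.
  rewrite tfE; [|exact: ltn_ord i|exact: ltn_ord j].
  by rewrite mulrDl; congr (_ + _); case: ifP; rewrite ?mul0r.
transitivity (\sum_(i < m.+1) \sum_(j < n.+1)
  ((if (0 < m - i)%N then u i j * v (m - i).-1 (n - j)%N else 0) +
   (if (0 < n - j)%N then u i j * v (m - i)%N (n - j).-1 else 0))); last first.
  apply: eq_bigr => i _; apply: eq_bigr => j _.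
  by rewrite tfE ?leq_subr // mulrDr; congr (_ + _); case: ifP; rewrite ?mulr0.
under eq_bigr do rewrite big_split.
under [RHS]eq_bigr do rewrite big_split.
rewrite big_split [RHS]big_split /=; congr (_ + _).
  rewrite exchange_big [RHS]exchange_big; apply: eq_bigr => j _.
  exact: (sum_ord_shift m (fun i i' => u i j * v i' (n - j)%N)).
apply: eq_bigr => i _; exact: (sum_ord_shift n (fun j j' => u i j * v (m - i)%N j')).
Qed.

Lemma bform_iter_tf a u v : bform (iter a (tf m n) u) v = bform u (iter a (tf m n) v).
Proof. by elim: a u v => [//|a IH] u v; rewrite iterSr IH bform_tf -iterS. Qed.

(* The action of e, normalised by e f^(i+1) phi_m = (i+1)(m-i) f^i phi_m. *)
Definition te (v : tvec) : tvec := fun i j =>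
  if (i <= m)%N && (j <= n)%N then
    (i%:R + 1) * (m%:R - i%:R) * v i.+1 j + (j%:R + 1) * (n%:R - j%:R) * v i j.+1
  else 0.

(* [e, f] = h, where h acts on f^i phi_m (x) f^j phi_n by m + n - 2(i + j). *)
Lemma te_tf v i j : supported v ->
  te (tf m n v) i j = tf m n (te v) i j + (m%:R + n%:R - 2 * (i + j)%:R) * v i j.
Proof.
move=> supp_v; rewrite {1}/te.
have [/andP [le_im le_jn]|out] := boolP ((i <= m) && (j <= n))%N; last first.
  rewrite supp_v // mulr0 addr0 /tf.
  by case/nandP: out => /negbTE ->; rewrite ?andbF ?andFb addr0.
have tf_up : (i%:R + 1) * (m%:R - i%:R) * tf m n v i.+1 j =
    (i%:R + 1) * (m%:R - i%:R) * (v i j + (if (0 < j)%N then v i.+1 j.-1 else 0)) :> rat.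
  move: le_im; rewrite leq_eqVlt => /orP [/eqP ->|lt_im]; first by rewrite subrr mulr0 !mul0r.
  by rewrite tfE.
have tf_right : (j%:R + 1) * (n%:R - j%:R) * tf m n v i j.+1 =
    (j%:R + 1) * (n%:R - j%:R) * ((if (0 < i)%N then v i.-1 j.+1 else 0) + v i j) :> rat.
  move: le_jn; rewrite leq_eqVlt => /orP [/eqP ->|lt_jn]; first by rewrite subrr mulr0 !mul0r.
  by rewrite tfE.
rewrite tf_up tf_right tfE //.
case: i le_im {tf_up tf_right} => [|i] le_im; case: j le_jn => [|j] le_jn /=.
all: rewrite /te; repeat (rewrite ifT; last by apply/andP; split; lia).
all: ring.
Qed.

Lemma te_phimnk k : (k <= m)%N -> (k <= n)%N -> forall i j, te (phimnk m n k) i j = 0.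
Proof.
move=> le_km le_kn i j; rewrite /te; case: ifP => // /andP [le_im le_jn].
have [/eqP deg|ne_deg] := boolP ((i + j).+1 == k); last first.
  by rewrite !phimnk_homogeneous ?mulr0 ?addr0 //; apply: contra ne_deg => /eqP <-; rewrite ?addnS.
rewrite /phimnk [in X in _ + X]ifT; last by apply/and4P; split; [lia|apply/eqP; lia|lia|lia].
move: le_im; rewrite leq_eqVlt => /orP [/eqP eq_im|lt_im].
  rewrite eq_im subrr !mulr0 mul0r add0r subnn (_ : k - m = j.+1)%N; last lia.
  by rewrite bin0n /= mul0n !mulr0.
rewrite ifT; last by apply/and4P; split; [lia|apply/eqP; lia|lia|lia].
rewrite (_ : k - i.+1 = j)%N; last lia.
rewrite (_ : k - i = j.+1)%N; last lia.
rewrite (_ : n - k + i.+1 = n - j)%N; last lia.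
rewrite (_ : n - k + i = (n - j).-1)%N; last lia.
rewrite (_ : m - i.+1 = (m - i).-1)%N; last lia.
rewrite -!natrB; [|lia|lia].
rewrite !natr1 -!natrM exprS.
rewrite mulrCA -!natrM mulnA mul_bin_shift !natrM; ring.
Qed.

Lemma tf_scale (c : rat) v w : (forall i j, w i j = c * v i j) ->
  forall i j, tf m n w i j = c * tf m n v i j.
Proof. by move=> eq_w i j; rewrite /tf !eq_w; case: ifP; case: ifP => _ _; ring. Qed.

Lemma weight_homogeneous d v i j : homogeneous d v ->
  (m%:R + n%:R - 2 * (i + j)%:R) * v i j = (m%:R + n%:R - 2 * d%:R) * v i j :> rat.
Proof.
by move=> hom_v; have [/eqP ->|ne_d] := boolP (i + j == d)%N; last rewrite hom_v // !mulr0.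
Qed.

Definition basis_vec (a b : nat) : tvec := fun i j => ((i == a) && (j == b))%:R.

Lemma bform_basis_vecl a b v : (a <= m)%N -> (b <= n)%N ->
  bform (basis_vec a b) v = v (m - a)%N (n - b)%N.
Proof.
move=> le_am le_bn; rewrite /bform.
rewrite (@big_ord_single m.+1 a
  (fun i => \sum_(j < n.+1) basis_vec a b i j * v (m - i)%N (n - j)%N)) // => [|i ne_ia].
  rewrite (@big_ord_single n.+1 b (fun j => basis_vec a b a j * v (m - a)%N (n - j)%N)) //.
    by rewrite /basis_vec !eqxx mul1r.
  by move=> j ne_jb; rewrite /basis_vec (negbTE ne_jb) andbF mul0r.
by apply: big1 => j _; rewrite /basis_vec (negbTE ne_ia) mul0r.
Qed.

(* Paths from (0, b) to (i, j) under f never leave the box, so they are counted by a binomial. *)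
Lemma iter_tf_basis_vec0 b s i j : (b <= n)%N ->
  iter s (tf m n) (basis_vec 0 b) i j =
  if [&& (i + j == b + s)%N, (i <= m)%N & (j <= n)%N] then 'C(s, i)%:R else 0.
Proof.
move=> le_bn; elim: s i j => [|s IH] i j.
  rewrite /= /basis_vec addn0; case: i => [|i] /=.
    by case: eqP => // ->; rewrite le_bn.
  by rewrite bin0n /=; case: ifP.
rewrite iterS /tf !IH.
case: i => [|i]; case: j => [|j] /=; repeat (case: ifP => ?);
  rewrite ?add0r ?addr0 ?bin0 //; try lia.
  by rewrite binS (@bin_small s i.+1) ?add0n //; lia.
by rewrite binS natrD addrC.
Qed.

Section HighestWeight.
Variable k : nat.
Hypotheses (le_km : (k <= m)%N) (le_kn : (k <= n)%N).
Local Notation top := (m + n - 2 * k)%N.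

Lemma te_fpow_phi a i j :
  te (fpow_phi m n k a.+1) i j =
  a.+1%:R * (m%:R + n%:R - 2 * k%:R - a%:R) * fpow_phi m n k a i j.
Proof.
elim: a i j => [|a IH] i j.
  rewrite fpow_phiS te_tf; last exact: fpow_phi_supported.
  rewrite (@tf_scale 0 (phimnk m n k)) => [|i' j']; last by rewrite te_phimnk ?mul0r.
  rewrite (@weight_homogeneous k); last exact: phimnk_homogeneous.
  by rewrite /fpow_phi /=; ring.
rewrite fpow_phiS te_tf; last exact: fpow_phi_supported.
rewrite (tf_scale _ _ _ IH) -fpow_phiS (@weight_homogeneous (k + a.+1));
  last exact: fpow_phi_homogeneous.
rewrite natrD; ring.
Qed.

Lemma fpow_phi_eq0 a : (top < a)%N -> forall i j, fpow_phi m n k a i j = 0.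
Proof.
move=> lt_a; have [t high] : exists t, (m + n < k + a + t)%N by exists (m + n).+1; lia.
elim: t a lt_a high => [|t IH] a lt_a high i j.
  apply: (supported_homogeneous_eq0 _ _ (fpow_phi_supported k a) (fpow_phi_homogeneous k a)).
  lia.
have next_eq0 i' j' : fpow_phi m n k a.+1 i' j' = 0 by apply: IH; lia.
have weight_neq0 : (a.+1%:R * (m%:R + n%:R - 2 * k%:R - a%:R) : rat) != 0.
  rewrite mulf_neq0 ?pnatr_eq0 //.
  have : ((m + n)%N%:R < (2 * k + a)%N%:R :> rat) by rewrite ltr_nat; lia.
  by rewrite !natrD => ?; apply/eqP => ?; lra.
have := te_fpow_phi a i j; rewrite /te !next_eq0 !mulr0 addr0 if_same => /esym /eqP.
by rewrite mulf_eq0 (negbTE weight_neq0) => /eqP.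
Qed.

Lemma fpow_phi_top_corner :
  fpow_phi m n k top m (n - k)%N = (-1) ^+ k * 'C(top, m - k)%:R.
Proof.
have -> : fpow_phi m n k top m (n - k)%N =
    bform (phimnk m n k) (iter top (tf m n) (basis_vec 0 k)).
  by rewrite bformC bform_iter_tf bform_basis_vecl ?subn0.
rewrite /bform (sum_homogeneous _ _ _ _
  (fun i j => iter top (tf m n) (basis_vec 0 k) (m - i)%N (n - j)%N)
  le_km le_kn (phimnk_homogeneous k)).
rewrite -(alt_bin_sumE (n - k) k) /alt_bin_sum mulr_suml; apply: eq_bigr => l _.
have le_lk : (l <= k)%N by rewrite -ltnS.
rewrite iter_tf_basis_vec0 // ifT; last by apply/and3P; split; [apply/eqP|..]; lia.
rewrite /phimnk ifT; last by apply/and4P; split; [|apply/eqP|..]; lia.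
have le_mk_ml : (m - k <= m - l)%N by lia.
have bin_top : ('C(m - l, k - l) * 'C(top, m - l) = 'C(top, m - k) * 'C(n - k, k - l))%N.
  have -> : 'C(m - l, k - l) = 'C(m - l, m - k).
    by rewrite -(bin_sub le_mk_ml); congr 'C(_, _); lia.
  by rewrite mulnC (bin_mul_bin _ _ _ le_mk_ml); congr (_ * 'C(_, _))%N; lia.
rewrite -!mulrA -!natrM mulnAC bin_top; congr (_ * _%:R); ring.
Qed.

Lemma fpow_phi_top_antidiag l : (l <= k)%N ->
  fpow_phi m n k top (m - l)%N (n - k + l)%N = (-1) ^+ l * fpow_phi m n k top m (n - k)%N.
Proof.
elim: l => [|l IH] lt_lk; first by rewrite subn0 addn0 mul1r.
have := fpow_phi_eq0 _ (ltnSn top) (m - l)%N (n - k + l).+1.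
rewrite fpow_phiS tfE; [|lia|lia].
rewrite ifT /=; last lia.
move/eqP; rewrite addr_eq0 => /eqP step.
rewrite (_ : m - l.+1 = (m - l).-1)%N; last lia.
by rewrite addnS step IH ?exprS; [ring | lia].
Qed.

Lemma bform_phimnk_top : bform (phimnk m n k) (fpow_phi m n k top) = (-1) ^+ k * Dmnk m n k.
Proof.
rewrite /bform (sum_homogeneous _ _ _ _ (fun i j => fpow_phi m n k top (m - i)%N (n - j)%N)
  le_km le_kn (phimnk_homogeneous k)).
transitivity (\sum_(l < k.+1) ('C(m - k + (k - l), k - l) * 'C(n - k + l, l))%:R *
                                ((-1) ^+ k * 'C(top, m - k)%:R) : rat).
  apply: eq_bigr => l _; have le_lk : (l <= k)%N by rewrite -ltnS.
  rewrite /phimnk ifT; last by apply/and4P; split; [|apply/eqP|..]; lia.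
  rewrite (_ : n - (k - l) = n - k + l)%N; last lia.
  rewrite fpow_phi_top_antidiag // fpow_phi_top_corner (_ : m - k + (k - l) = m - l)%N; last lia.
  by rewrite mulrACA -exprMn mulrNN mulr1 expr1n mul1r.
rewrite -big_distrl /= -natr_sum bin_conv_sum /Dmnk.
rewrite (_ : m - k + (n - k) + k + 1 = m + n - k + 1)%N; last lia.
by rewrite natrM; ring.
Qed.

End HighestWeight.

Lemma bform_suml (I : Type) (r : seq I) (P : pred I) (x : I -> rat) (u : I -> tvec) v :
  bform (fun i j => \sum_(s <- r | P s) x s * u s i j) v =
  \sum_(s <- r | P s) x s * bform (u s) v.
Proof.
rewrite /bform; under eq_bigr do under eq_bigr do rewrite mulr_suml.
under eq_bigr do rewrite exchange_big /=.
rewrite exchange_big /=; apply: eq_bigr => s _.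
rewrite mulr_sumr; apply: eq_bigr => i _.
by rewrite mulr_sumr; apply: eq_bigr => j _; rewrite mulrA.
Qed.

Lemma bform_sumr (I : Type) (r : seq I) (P : pred I) (y : I -> rat) u (v : I -> tvec) :
  bform u (fun i j => \sum_(s <- r | P s) y s * v s i j) =
  \sum_(s <- r | P s) y s * bform u (v s).
Proof. by rewrite bformC bform_suml; under eq_bigr do rewrite bformC. Qed.

Lemma bform_eq0r u v : (forall i j, v i j = 0) -> bform u v = 0.
Proof. by move=> v0; apply: big1 => i _; apply: big1 => j _; rewrite v0 mulr0. Qed.

Lemma bform_fpow_phi k k' a b : (k <= minn m n)%N -> (k' <= minn m n)%N ->
  (k + a + (k' + b) = m + n)%N ->
  bform (fpow_phi m n k a) (fpow_phi m n k' b) = (-1) ^+ k * (k == k')%:R * Dmnk m n k.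
Proof.
rewrite !leq_min => /andP [le_km le_kn] /andP [le_k'm le_k'n] weight_ab.
have -> : bform (fpow_phi m n k a) (fpow_phi m n k' b) =
    bform (phimnk m n k) (fpow_phi m n k' (a + b)) by rewrite /fpow_phi bform_iter_tf iterD.
have [lt_kk'|lt_k'k|eq_kk'] := ltngtP k k'.
- rewrite mulr0 mul0r bform_eq0r // => i j.
  by apply: fpow_phi_eq0 => //; lia.
- rewrite mulr0 mul0r /fpow_phi -bform_iter_tf bformC bform_eq0r // => i j.
  by apply: fpow_phi_eq0 => //; lia.
- by subst k'; rewrite mulr1 (_ : a + b = m + n - 2 * k)%N ?bform_phimnk_top //; lia.
Qed.

End TensorProduct.

Lemma sum_cmnk_orthogonal m n k k' p :
  (k <= minn m n)%N -> (k' <= minn m n)%N ->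
  (maxn k k' <= p)%N -> (p <= m + n - maxn k k')%N ->
  \sum_(i < m.+1) \sum_(j < n.+1 | (i + j == p)%N)
     cmnk m n k i j * cmnk m n k' (m - i)%N (n - j)%N
  = (-1) ^+ k * (k == k')%:R * Dmnk m n k.
Proof.
move=> le_k le_k' le_p le_p'.
rewrite -(bform_fpow_phi _ _ _ _ (p - k) (m + n - p - k') le_k le_k'); last lia.
apply: eq_bigr => i _; rewrite big_mkcond; apply: eq_bigr => j _ /=.
case: ifP => [/eqP sum_ij|/negbT ne_p].
  move: (ltn_ord i) (ltn_ord j) => lt_im lt_jn.
  by rewrite /cmnk; congr (fpow_phi _ _ _ _ _ _ * fpow_phi _ _ _ _ _ _); lia.
by rewrite fpow_phi_homogeneous ?mul0r //; lia.
Qed.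

Lemma sum_CG_orthogonal m n C : is_CG m n C ->
  forall i j i' j' p : nat,
    (i <= m)%N -> (j <= n)%N -> (i' <= m)%N -> (j' <= n)%N ->
    (i + j)%N = p -> (i' + j')%N = p ->
    \sum_(k < (minn m n).+1 | (k <= p <= m + n - k)%N)
       (-1) ^+ k * C k (m - i)%N (n - j)%N * C k i' j' * Dmnk m n k
    = (i == i')%:R * (j == j')%:R.
Proof.
move=> CG i j i' j' p le_im le_jn le_i'm le_j'n sum_ij sum_i'j'.
have <- : bform m n (basis_vec (m - i) (n - j)) (basis_vec i' j') = (i == i')%:R * (j == j')%:R.
  by rewrite bform_basis_vecl ?leq_subr // !subKn // /basis_vec -mulnb natrM.
pose P (q k : nat) := (k <= q <= m + n - k)%N.
rewrite (eq_bform _ _ _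
  (fun a b => \sum_(k < (minn m n).+1 | P (m - i + (n - j))%N k)
     C k (m - i)%N (n - j)%N * fpow_phi m n k (m - i + (n - j) - k) a b) _
  (fun a b => \sum_(k < (minn m n).+1 | P (i' + j')%N k)
     C k i' j' * fpow_phi m n k (i' + j' - k) a b));
  last 2 first.
- by move=> a b le_am le_bn; apply: CG; rewrite ?leq_subr.
- by move=> a b le_am le_bn; apply: CG.
rewrite bform_suml; apply: eq_big => [k|k]; rewrite /P.
  by apply/idP/idP => /andP [? ?]; apply/andP; split; lia.
move=> /andP [le_kp le_pk]; have le_k := ltn_ord k; rewrite ltnS in le_k.
rewrite bform_sumr (bigD1 k) /=; last by rewrite /P; apply/andP; split; lia.
rewrite big1 ?addr0 => [|k' /andP [/andP [le_k'_ij _] ne_k'k]].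
  by rewrite bform_fpow_phi ?eqxx //= ?mulr1n; [ring | lia].
have le_k' : (k' <= minn m n)%N by rewrite -ltnS.
rewrite bform_fpow_phi //; last lia.
case: eqP => [/val_inj eq_kk'|_]; last by rewrite mulr0 mul0r mulr0.
by rewrite eq_kk' eqxx in ne_k'k.
Qed.

Theorem corollary4p11 (m n : nat) :
  (forall k k' p : nat,
     (k <= minn m n)%N -> (k' <= minn m n)%N ->
     (maxn k k' <= p)%N -> (p <= m + n - maxn k k')%N ->
     \sum_(i < m.+1) \sum_(j < n.+1 | (i + j == p)%N)
        cmnk m n k i j * cmnk m n k' (m - i)%N (n - j)%N
     = (-1) ^+ k * (k == k')%:R * Dmnk m n k)
  /\
  (forall C : nat -> nat -> nat -> rat, is_CG m n C ->
   forall i j i' j' p : nat,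
     (i <= m)%N -> (j <= n)%N -> (i' <= m)%N -> (j' <= n)%N ->
     (i + j)%N = p -> (i' + j')%N = p ->
     \sum_(k < (minn m n).+1 | (k <= p <= m + n - k)%N)
        (-1) ^+ k * C k (m - i)%N (n - j)%N * C k i' j' * Dmnk m n k
     = (i == i')%:R * (j == j')%:R).
Proof.
split; [exact: sum_cmnk_orthogonal | exact: sum_CG_orthogonal].
Qed.
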